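(* If $\mathsf B$ is a bad piece, then for any two distinct vertices $v_1,v_2\in V(\mathsf B)$ there exists a subgraph of $\mathsf B$ which is a rainbow path with terminals $v_1$ and $v_2$.
   Context: A (colored) graph is a finite set $\mathsf G$ of pairs $(e,\alpha)$, where the $e$'s are pairwise distinct 2-element subsets of a vertex set and $\alpha$ is a color (colors may repeat). $V(\mathsf G)$ is its vertex set and $\chi(\mathsf G)$ the set of colors used; $\mathsf G$ is rainbow if $|\chi(\mathsf G)|=|\mathsf G|$ and almost rainbow if $|\chi(\mathsf G)|=|\mathsf G|-1$. A subgraph is a subset. A path is a colored graph whose underlying uncolored edges form a path with two distinct terminals. A theta graph is a union $\mathsf P_1\cup\mathsf P_2\cup\mathsf P_3$ of three paths with the same terminals $s\neq t$ such that any two of them share no vertex other than $s,t$ and no underlying uncolored edge. A bad piece is an almost rainbow theta graph with at least $6$ vertices that is the union of three rainbow paths $\mathsf P_1,\mathsf P_2,\mathsf P_3$ as in the definition of a theta graph. *)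

From HB Require Import structures.
From mathcomp Require Import all_boot.
From mathcomp Require Import finmap.
Set Implicit Arguments. Unset Strict Implicit. Unset Printing Implicit Defensive.
Local Open Scope fset_scope.

Section ColoredGraphs.
Variables (V C : choiceType).

(* A colored graph: a finite set of pairs (e, alpha), e a 2-element vertex set. *)
Definition cgraph := {fset ({fset V} * C)}.

Definition is_cgraph (G : cgraph) : Prop :=
  (forall p, p \in G -> #|` p.1| = 2) /\
  (forall p q, p \in G -> q \in G -> p.1 = q.1 -> p = q).

Definition uedges (G : cgraph) : {fset {fset V}} := [fset p.1 | p in G].
Definition verts (G : cgraph) : {fset V} := \bigcup_(p <- G) p.1.
Definition colors (G : cgraph) : {fset C} := [fset p.2 | p in G].

Definition rainbow (G : cgraph) : Prop := #|` colors G| = #|` G|.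
Definition almost_rainbow (G : cgraph) : Prop := (#|` colors G|).+1 = #|` G|.

Definition is_path (P : cgraph) (s t : V) : Prop :=
  is_cgraph P /\ s != t /\
  exists xs : seq V, [/\ uniq (s :: xs), last s xs = t &
    uedges P =i [seq [fset q.1; q.2] | q <- zip (s :: xs) xs]].

Definition theta_of (G P1 P2 P3 : cgraph) (s t : V) : Prop :=
  [/\ s != t, [/\ is_path P1 s t, is_path P2 s t & is_path P3 s t],
      G = P1 `|` P2 `|` P3,
      [/\ verts P1 `&` verts P2 `<=` [fset s; t],
          verts P1 `&` verts P3 `<=` [fset s; t] &
          verts P2 `&` verts P3 `<=` [fset s; t]] &
      [/\ uedges P1 `&` uedges P2 = fset0,
          uedges P1 `&` uedges P3 = fset0 &
          uedges P2 `&` uedges P3 = fset0]].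

Definition is_theta (G : cgraph) : Prop :=
  exists P1 P2 P3 s t, theta_of G P1 P2 P3 s t.

Definition bad_piece (B : cgraph) : Prop :=
  [/\ almost_rainbow B, 6 <= #|` verts B| &
      exists P1 P2 P3 s t, [/\ theta_of B P1 P2 P3 s t,
                               rainbow P1, rainbow P2 & rainbow P3]].

End ColoredGraphs.

(* Let [p] be an edge of [B] whose colour is repeated; since [B] is almost
   rainbow, [B] minus [p] is rainbow.  A theta graph stays connected after
   deleting any edge [p]: every vertex of the path through [p] stays attached
   to one of the two terminals, and the terminals are still joined by one of
   the other two paths.  A shortest walk from [v1] to [v2] in [B] minus [p]
   is then the required rainbow path. *)
From HB Require Import structures.
From mathcomp Require Import all_boot.
From mathcomp Require Import finmap.
From Stdlib Require Import Relation_Operators Operators_Properties.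
Set Implicit Arguments. Unset Strict Implicit.
Local Open Scope fset_scope.

Section Reachability.
Variables (T : eqType) (e : rel T).

Local Notation reach := (clos_refl_trans T (fun x y => e x y)).

Lemma reach_path x y : reach x y -> exists2 p, path e x p & last x p = y.
Proof.
move=> rxy; move: (clos_rt_rt1n _ _ _ _ rxy) => {rxy}.
elim=> [|{}x z {}y exz _ [p ezp <-]]; first by exists [::].
by exists (z :: p); rewrite //= exz.
Qed.

Lemma reach_uniq_path x y :
  reach x y -> exists p, [/\ path e x p, uniq (x :: p) & last x p = y].
Proof.
move=> /reach_path [p exp <-]; case: (shortenP exp) => p' ep' up' _.
by exists p'.
Qed.

Lemma path_reach_last x p :
  path e x p -> forall v, v \in x :: p -> reach v (last x p).
Proof.
elim: p x => [|y p IHp] x /=.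
  by move=> _ v; rewrite mem_seq1 => /eqP ->; apply: rt_refl.
move=> /andP [exy eyp] v; rewrite in_cons => /predU1P [->|vp]; last exact: IHp.
by apply: rt_trans (rt_step _ _ _ _ exy) (IHp _ eyp _ (mem_head _ _)).
Qed.

Hypothesis e_sym : symmetric e.

Lemma reach_sym x y : reach x y -> reach y x.
Proof.
elim=> [{}x {}y exy||{}x z {}y _ IHxz _ IHzy]; last exact: rt_trans IHzy IHxz.
  by apply: rt_step; rewrite e_sym.
exact: rt_refl.
Qed.

End Reachability.

Lemma path_zipE (T : Type) (e : rel T) x s :
  path e x s = all (fun q => e q.1 q.2) (zip (x :: s) s).
Proof. by elim: s x => //= y s IHs x; rewrite IHs. Qed.

Lemma mem_zip (S T : eqType) (a : seq S) (b : seq T) u w :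
  (u, w) \in zip a b -> u \in a /\ w \in b.
Proof.
elim: a b => [|x a IHa] [|y b] //=; rewrite !in_cons.
by case/predU1P => [[-> ->]|/IHa [-> ->]]; rewrite ?eqxx ?orbT.
Qed.

Section ColoredGraphs.
Variables (V C : choiceType).
Implicit Types (G P : cgraph V C) (U : {fset {fset V}}).

Definition adj U : rel V := fun u w => [fset u; w] \in U.

Local Notation reach U := (clos_refl_trans V (fun x y => adj U x y)).

Lemma adj_sym U : symmetric (adj U).
Proof. by move=> u w; rewrite /adj fsetUC. Qed.

Lemma reach_subset U U' x y : U `<=` U' -> reach U x y -> reach U' x y.
Proof.
move=> /fsubsetP sUU'; elim=> {x y} [x y Uxy|x|x y z _ rxy _ ryz].
- by apply: rt_step; apply: sUU'.
- exact: rt_refl.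
- exact: rt_trans rxy ryz.
Qed.

Lemma vertsP G v : reflect (exists2 q, q \in G & v \in q.1) (v \in verts G).
Proof.
apply: (iffP (bigfcupP _ _ (fun q => q.1) xpredT)).
  by move=> [q /andP [qG _] vq]; exists q.
by move=> [q qG vq]; exists q; rewrite ?qG.
Qed.

Lemma uedgesS G G' : G `<=` G' -> uedges G `<=` uedges G'.
Proof. by move=> /fsubsetP sGG'; apply: subset_imfset. Qed.

Lemma is_cgraphS G G' : G `<=` G' -> is_cgraph G' -> is_cgraph G.
Proof.
move=> /fsubsetP sGG' [G'2 G'inj]; split; first by move=> p /sGG'; apply: G'2.
by move=> p q /sGG' pG' /sGG'; apply: G'inj.
Qed.

Lemma is_cgraphU G G' : is_cgraph G -> is_cgraph G' ->
  uedges G `&` uedges G' = fset0 -> is_cgraph (G `|` G').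
Proof.
move=> [G2 Ginj] [G'2 G'inj] disjGG'.
have edge_neq p q : p \in G -> q \in G' -> p.1 != q.1.
  move=> pG qG'; apply: contra_eqN disjGG' => /eqP pq.
  by apply/fset0Pn; exists p.1; rewrite in_fsetI in_imfset //= pq in_imfset.
split; first by move=> p /fsetUP [/G2|/G'2].
move=> p q /fsetUP [pG|pG'] /fsetUP [qG|qG'] pq; try by [apply: Ginj|apply: G'inj].
  by move/eqP: (edge_neq _ _ pG qG').
by move/eqP: (edge_neq _ _ qG pG'); rewrite pq.
Qed.

Lemma uedgesU G G' : uedges (G `|` G') = uedges G `|` uedges G'.
Proof. exact: imfsetU. Qed.

Lemma theta_cgraph G P1 P2 P3 s t : theta_of G P1 P2 P3 s t -> is_cgraph G.
Proof.
move=> [_ [[P1g _] [P2g _] [P3g _]] -> _ [d12 d13 d23]].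
apply: is_cgraphU => //; first exact: is_cgraphU.
by rewrite uedgesU fsetIUl d13 d23 fsetU0.
Qed.

Lemma uedgesD1 G p : is_cgraph G -> p \in G -> uedges (G `\ p) = uedges G `\ p.1.
Proof.
move=> [_ Ginj] pG; apply/fsetP => e; apply/imfsetP/fsetD1P => /=.
  move=> [q /fsetD1P [qp qG] ->]; split; last exact: in_imfset.
  by apply: contraNneq qp => /(Ginj _ _ qG pG) ->.
move=> [ep /imfsetP [q /= qG eq]]; exists q => //; apply/fsetD1P; split=> //.
by apply: contraNneq ep => qp; rewrite eq qp.
Qed.

Lemma rainbowP G : rainbow G <-> {in G &, injective snd}.
Proof. by split=> [/eqP|?]; [move/card_in_imfsetP | apply/eqP/card_in_imfsetP]. Qed.

Lemma rainbowS G G' : G `<=` G' -> rainbow G' -> rainbow G.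
Proof.
move=> /fsubsetP sGG' /rainbowP G'inj.
by apply/rainbowP => p q /sGG' pG' /sGG'; apply: G'inj.
Qed.

Lemma almost_rainbow_fsetD1 G :
  almost_rainbow G -> exists2 p, p \in G & rainbow (G `\ p).
Proof.
rewrite /almost_rainbow => arG.
have [/hasP [p pG pc]|/hasPn nodup] := boolP (has (fun p => p.2 \in colors (G `\ p)) G).
  exists p => //; rewrite /rainbow.
  have -> : colors (G `\ p) = colors G.
    rewrite -[in RHS](fsetD1K pG) /colors imfsetU1.
    by apply/esym/fsetUidPr; rewrite fsub1set.
  by apply/eqP; rewrite -eqSS arG (cardfsD1 p) pG.
suff /rainbowP rG : {in G &, injective snd} by move: arG; rewrite rG => /esym/n_Sn.
move=> p q pG qG pq; apply/eqP; apply: contraT => npq.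
by have := nodup p pG; rewrite /= pq in_imfset //; apply/fsetD1P; rewrite eq_sym.
Qed.

Lemma is_path_walk P s t : is_path P s t ->
  exists xs, [/\ uniq (s :: xs), last s xs = t, path (adj (uedges P)) s xs
               & {subset verts P <= s :: xs}].
Proof.
move=> [_ [_ [xs [uxs <- Pxs]]]]; exists xs; split=> //.
  rewrite path_zipE; apply/allP => q qxs; rewrite /adj Pxs.
  by apply/mapP; exists q.
move=> v /vertsP [q qP vq]; have : q.1 \in uedges P by apply: in_imfset.
rewrite Pxs => /mapP [[u w] /mem_zip [us wxs] equw].
move: vq; rewrite equw => /fset2P [->|->] //.
by rewrite in_cons wxs orbT.
Qed.

Lemma is_path_reach P s t : is_path P s t -> reach (uedges P) s t.
Proof.
case/is_path_walk => xs [_ <- Pxs _]; apply: path_reach_last Pxs _ (mem_head _ _).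
Qed.

Lemma reach_subgraph_path G x y : is_cgraph G -> x != y ->
  reach (uedges G) x y -> exists2 P, P `<=` G & is_path P x y.
Proof.
move=> Gg xy /reach_uniq_path [xs [Gxs uxs lxs]].
set pairs := [seq [fset q.1; q.2] | q <- zip (x :: xs) xs].
have sPG : [fset r in G | r.1 \in pairs] `<=` G.
  by apply/fsubsetP => r; rewrite !inE => /andP [].
exists [fset r in G | r.1 \in pairs] => //; split; first exact: is_cgraphS Gg.
split=> //; exists xs; split=> // e; apply/imfsetP/idP => /= [[r]|epairs].
  by rewrite !inE => /andP [_ ?] ->.
have /mapP [q qxs eq] := epairs.
move: Gxs; rewrite path_zipE => /allP /(_ q qxs).
rewrite /adj -eq => /imfsetP [r /= rG er].
by exists r; rewrite // !inE rG -er epairs.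
Qed.

Lemma path_fsetD1_reach U b x xs : uniq (x :: xs) -> path (adj U) x xs ->
  forall v, v \in x :: xs -> reach (U `\ b) v x \/ reach (U `\ b) v (last x xs).
Proof.
elim: xs x => [|y xs IHxs] x.
  by move=> _ _ v; rewrite mem_seq1 => /eqP ->; left; apply: rt_refl.
move=> /= /andP [xyxs uyxs] /andP [Uxy Uyxs] v.
rewrite in_cons => /predU1P [->|vyxs]; first by left; apply: rt_refl.
have [xyb|xyb] := eqVneq [fset x; y] b.
  (* past the deleted edge the path never returns to [x], so it avoids [b] *)
  right; apply: path_reach_last vyxs.
  apply: (@sub_in_path _ (mem (y :: xs))) Uyxs; last exact/allP.
  move=> u w u_yxs w_yxs Uuw; apply/fsetD1P; split=> //.
  apply: contraNneq xyxs => uwb.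
  have : x \in [fset u; w] by rewrite uwb -xyb fset21.
  by case/fset2P => ->.
have [vy|vl] := IHxs y uyxs Uyxs v vyxs; last by right.
left; apply: rt_trans vy (rt_step _ _ _ _ _).
by rewrite adj_sym; apply/fsetD1P.
Qed.

Lemma is_path_fsetD1_reach P s t U b :
  is_path P s t -> uedges P `<=` U -> reach (U `\ b) s t ->
  forall v, v \in verts P -> reach (U `\ b) v s.
Proof.
case/is_path_walk => xs [uxs lxs Pxs Pv] PU rst v /Pv vxs.
have Uxs : path (adj U) s xs.
  by apply: sub_path Pxs => u w; apply: (fsubsetP PU).
have [//|vt] := path_fsetD1_reach b uxs Uxs vxs.
by apply: rt_trans vt _; rewrite lxs; apply: reach_sym rst; apply: adj_sym.
Qed.

Lemma theta_reach_fsetD1 G P1 P2 P3 s t b : theta_of G P1 P2 P3 s t ->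
  {in verts G &, forall v1 v2, reach (uedges G `\ b) v1 v2}.
Proof.
move=> [_ [P1st P2st P3st] defG _ [d12 _ _]].
have [sP1 sP2 sP3] : [/\ P1 `<=` G, P2 `<=` G & P3 `<=` G].
  rewrite defG; split; last exact: fsubsetUr.
    by rewrite -fsetUA fsubsetUl.
  exact: fsubset_trans (fsubsetUr P1 P2) (fsubsetUl _ P3).
have rst : reach (uedges G `\ b) s t.
  have [bP1|bP1] := boolP (b \in uedges P1).
    have bP2 : b \notin uedges P2.
      by apply: contraTN bP1 => bP2; rewrite -[b \in _]andbT -bP2 -in_fsetI d12.
    by apply: reach_subset (is_path_reach P2st); rewrite fsubsetD1 uedgesS.
  by apply: reach_subset (is_path_reach P1st); rewrite fsubsetD1 uedgesS.
have rs v : v \in verts G -> reach (uedges G `\ b) v s.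
  case/vertsP => q + vq; rewrite {1}defG => /fsetUP [/fsetUP []|] qP.
  - by apply: is_path_fsetD1_reach P1st (uedgesS sP1) rst _ _; apply/vertsP; exists q.
  - by apply: is_path_fsetD1_reach P2st (uedgesS sP2) rst _ _; apply/vertsP; exists q.
  - by apply: is_path_fsetD1_reach P3st (uedgesS sP3) rst _ _; apply/vertsP; exists q.
move=> v1 v2 /rs r1s /rs r2s; apply: rt_trans r1s _.
by apply: reach_sym r2s; apply: adj_sym.
Qed.

End ColoredGraphs.

Theorem mainTheorem5 (V C : choiceType) (B : cgraph V C) :
  bad_piece B ->
  forall v1 v2 : V, v1 \in verts B -> v2 \in verts B -> v1 != v2 ->
  exists P : cgraph V C, P `<=` B /\ is_path P v1 v2 /\ rainbow P.
Proof.
move=> [arB _ [P1 [P2 [P3 [s [t [thetaB _ _ _]]]]]]] v1 v2 v1B v2B v12.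
have Bg := theta_cgraph thetaB.
have [p pB rBp] := almost_rainbow_fsetD1 arB.
have sBpB : B `\ p `<=` B := fsubsetDl B [fset p].
have r12 := theta_reach_fsetD1 p.1 thetaB v1B v2B.
rewrite -uedgesD1 // in r12.
have [P sPBp Pv12] := reach_subgraph_path (is_cgraphS sBpB Bg) v12 r12.
exists P; split; first exact: fsubset_trans sPBp sBpB.
by split=> //; apply: rainbowS rBp.
Qed.
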